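(* Let $G$ be a $1$-tuple regular finite group, let $N$ be a subgroup of $G$ that is a union of order classes, set $\bar G=G/N$, and let $a,b\in\bar G$ be elements of the same order. Then (i) there exist preimages $g_a,g_b\in G$ of $a$ and $b$, respectively, with the same order; and (ii) the conjugacy classes of $a$ and $b$ in $\bar G$ have the same size.
   Context: A subgroup $N$ of $G$ is a union of order classes if for every $n\in\mathbb{N}$ it contains either all or none of the elements of order $n$ of $G$ (such $N$ is normal). A finite group $G$ is $1$-tuple regular if for all $g_1,h_1\in G$ of the same order there is a bijection $\Psi\colon G\to G$ such that for every $g\in G$ the assignment $g_1\mapsto h_1, g\mapsto\Psi(g)$ defines an isomorphism $\langle g_1,g\rangle\to\langle h_1,\Psi(g)\rangle$. *)

From mathcomp Require Import all_boot all_fingroup.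
Set Implicit Arguments. Unset Strict Implicit. Unset Printing Implicit Defensive.
Local Open Scope group_scope.

(* The finite group G of the paper is the whole finGroupType gT. *)

Definition union_of_order_classes (gT : finGroupType) (N : {set gT}) : Prop :=
  forall x y : gT, #[x] = #[y] -> (x \in N) = (y \in N).

Definition one_tuple_regular (gT : finGroupType) : Prop :=
  forall g1 h1 : gT, #[g1] = #[h1] ->
    exists Psi : gT -> gT, bijective Psi /\
      forall g : gT,
        exists f : {morphism <<[set g1; g]>> >-> gT},
          [/\ isom <<[set g1; g]>> <<[set h1; Psi g]>> f,
              f g1 = h1 & f g = Psi g].

From mathcomp Require Import all_boot all_fingroup all_solvable.

(* Since N is a union of order classes it is normal, and whether g ^+ k lies
   in N depends only on #[g] and k, so elements of equal order have cosets of
   equal order.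
   (i) Lift a and b to x and y and replace them by their pi-parts, with
   pi = \pi(#[a]); these still lift a and b.  For p in pi the p-parts of x
   and y have p-power orders, say #[x_p] %| #[y_p].  For c = #[y_p] %/ #[x_p]
   the element y_p ^+ c has the order of x_p, so its coset has the same order
   #[a]`_p as the coset of y_p; as c is a power of p and p divides #[a]`_p,
   this forces c = 1.
   (ii) The preimage of 'C[xN] in G is cent1_mod N x, so the class of xN has
   #|G| %/ #|cent1_mod N x| elements.  The isomorphisms <<x, g>> -> <<y, Psi g>>
   given by 1-tuple regularity preserve the order of [~ x, g], hence Psi maps
   cent1_mod N x onto cent1_mod N y. *)

Set Implicit Arguments.
Unset Strict Implicit.
Unset Printing Implicit Defensive.

Local Open Scope group_scope.

Definition cent1_mod (gT : finGroupType) (N : {set gT}) (x : gT) : {set gT} :=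
  [set g | [~ x, g] \in N].

Section QuotientByNormal.

Variables (gT : finGroupType) (N : {group gT}).
Hypothesis nNT : [set: gT] \subset 'N(N).

Let nNg (g : gT) : g \in 'N(N). Proof. exact: subsetP nNT g (in_setT g). Qed.

Lemma coset_eq1 (g : gT) : (coset N g == 1) = (g \in N).
Proof. by apply/eqP/idP => [/(coset_idr (nNg g))|/coset_id]. Qed.

Lemma coset_expg_eq1 (g : gT) k : (coset N g ^+ k == 1) = (g ^+ k \in N).
Proof. by rewrite -morphX ?nNg ?coset_eq1. Qed.

Lemma cent1_coset (x g : gT) :
  (coset N g \in 'C[coset N x]) = (g \in cent1_mod N x).
Proof.
rewrite [in RHS]inE -coset_eq1 morphR ?nNg //.
by apply/cent1P/commgP => /esym.
Qed.

Lemma morphpre_cent1_coset (x : gT) :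
  coset N @*^-1 'C[coset N x] = cent1_mod N x.
Proof.
apply/setP => g; rewrite -cent1_coset.
by apply/morphpreP/idP => [[]|] //; split.
Qed.

Lemma card_cent1_mod (x : gT) :
  #|cent1_mod N x| = (#|N| * #|'C[coset N x]|)%N.
Proof.
rewrite -morphpre_cent1_coset card_morphpre ?ker_coset //.
by rewrite -quotientE im_quotient subsetT.
Qed.

Lemma card_class_coset (x : gT) :
  (#|coset N x ^: [set: coset_of N]| * #|cent1_mod N x|)%N = #|gT|.
Proof.
rewrite card_cent1_mod -index_cent1 setTI mulnCA (mulnC #|_ : _|).
rewrite Lagrange ?subsetT //= -quotientT card_quotient //.
by rewrite Lagrange ?subsetT // cardsT.
Qed.

End QuotientByNormal.

Section OrderClasses.

Variables (gT : finGroupType) (N : {group gT}).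
Hypothesis ocN : union_of_order_classes N.

Lemma order_classes_normT : [set: gT] \subset 'N(N).
Proof.
apply/subsetP => g _; apply/normP/eqP; rewrite eqEcard cardJg leqnn andbT.
by apply/subsetP => y; rewrite mem_conjg (ocN (orderJ y g^-1)).
Qed.

Let nNg (g : gT) : g \in 'N(N).
Proof. exact: subsetP order_classes_normT g (in_setT g). Qed.

Lemma order_coset_eq (x y : gT) : #[x] = #[y] -> #[coset N x] = #[coset N y].
Proof.
move=> oxy; have nNT := order_classes_normT.
have eq1 k : (coset N x ^+ k == 1) = (coset N y ^+ k == 1).
  have oxyk : #[x ^+ k] = #[y ^+ k] by rewrite !orderXgcd oxy.
  by rewrite !coset_expg_eq1 // (ocN oxyk).
by apply/eqP; rewrite eqn_dvd !order_dvdn eq1 -[in X in _ && X]eq1 !expg_order eqxx.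
Qed.

Lemma pelt_order_coset_eq p (u v : gT) :
    prime p -> p.-elt u -> p.-elt v -> #[coset N u] = #[coset N v] ->
  p %| #[coset N u] -> #[u] = #[v].
Proof.
move=> p_pr; wlog ouv : u v / #[u] %| #[v] => [wlog_ouv pu pv ocuv p_ocu|].
  have : (#[u] %| #[v]) || (#[v] %| #[u]).
    rewrite -(part_pnat_id pu) -(part_pnat_id pv) !p_part.
    by rewrite !dvdn_Pexp2l ?prime_gt1 ?leq_total.
  case/orP=> [ouv|ovu]; first exact: wlog_ouv.
  by apply/esym/wlog_ouv; rewrite -?ocuv.
move=> _ pv ocuv p_ocu; set c := #[v] %/ #[u].
have ov : #[v] = (c * #[u])%N by rewrite divnK.
have c_gt0 : 0 < c by rewrite divn_gt0 // dvdn_leq.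
have ovc : #[v ^+ c] = #[u] by rewrite orderXdiv ov ?dvdn_mulr ?mulKn.
have ocvc : #[coset N v ^+ c] = #[coset N v].
  by rewrite -morphX ?nNg // (order_coset_eq ovc).
have pi_c : \pi(#[coset N v]).-nat c.
  have pc : p.-nat c by apply: pnat_dvd pv; rewrite ov dvdn_mulr.
  apply: sub_in_pnat pc => q _ /eqnP->.
  by rewrite -ocuv mem_primes p_pr order_gt0 p_ocu.
have := orderXpnat ocvc pi_c.
rewrite -{1}[#[coset N v]]mul1n => /eqP; rewrite eqn_pmul2r // => /eqP c1.
by rewrite ov -c1 mul1n.
Qed.

Lemma constt_order_coset_eq (x y : gT) (pi := \pi(#[coset N x])) :
  #[coset N x] = #[coset N y] -> #[x.`_pi] = #[y.`_pi].
Proof.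
move=> ocxy; rewrite !order_constt; apply: eq_partn_from_log => // p pi_p.
have p_pr : prime p by move: pi_p; rewrite mem_primes => /andP[].
rewrite -logn_part -[RHS]logn_part -!order_constt; congr (logn p _).
apply: (pelt_order_coset_eq p_pr); rewrite ?p_elt_constt //.
  by rewrite !morph_constt ?nNg // !order_constt ocxy.
by rewrite morph_constt ?nNg // order_constt p_part dvdn_exp // logn_gt0.
Qed.

Lemma coset_lift_eq_order (a b : coset_of N) : #[a] = #[b] ->
  exists ga gb : gT, [/\ coset N ga = a, coset N gb = b & #[ga] = #[gb]].
Proof.
rewrite -[a]coset_reprK -[b]coset_reprK => oab.
set pi := \pi(#[coset N (repr a)]).
have pi_a : pi.-elt (coset N (repr a)) by apply: pnat_pi.
have pi_b : pi.-elt (coset N (repr b)) by rewrite /pi oab; apply: pnat_pi.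
exists (repr a).`_pi, (repr b).`_pi.
rewrite !morph_constt ?nNg // (constt_p_elt pi_a) (constt_p_elt pi_b).
by split; last exact: constt_order_coset_eq.
Qed.

Hypothesis regG : one_tuple_regular gT.

Lemma card_cent1_mod_eq (x y : gT) :
  #[x] = #[y] -> #|cent1_mod N x| = #|cent1_mod N y|.
Proof.
move=> oxy; have [Psi [bijPsi isoPsi]] := regG oxy.
have cent1_modPsi g : (g \in cent1_mod N x) = (Psi g \in cent1_mod N y).
  have [f [isof fx fg]] := isoPsi g; rewrite !inE; apply: ocN.
  have x_xg : x \in <<[set x; g]>> by rewrite mem_gen // !inE eqxx.
  have g_xg : g \in <<[set x; g]>> by rewrite mem_gen // !inE eqxx orbT.
  by rewrite -fx -fg -morphR // order_injm ?groupR // (isom_inj isof).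
have -> : cent1_mod N y = Psi @: cent1_mod N x.
  have [Phi PsiK PhiK] := bijPsi.
  apply/setP => h; rewrite -[h in LHS]PhiK -cent1_modPsi.
  apply/idP/imsetP => [|[g Cg ->]]; last by rewrite PsiK.
  by exists (Phi h); rewrite ?PhiK.
by rewrite card_imset //; apply: bij_inj.
Qed.

End OrderClasses.

Theorem lemma3p5 (gT : finGroupType) (N : {group gT})
  (hG : one_tuple_regular gT) (hN : union_of_order_classes N)
  (a b : coset_of N)
  (ha : a \in ([set: gT] / N)) (hb : b \in ([set: gT] / N))
  (hab : #[a] = #[b]) :
  (exists ga gb : gT, [/\ coset N ga = a, coset N gb = b & #[ga] = #[gb]])
  /\ #|a ^: ([set: gT] / N)| = #|b ^: ([set: gT] / N)|.
Proof.
have lift_ab := coset_lift_eq_order hN hab.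
split=> //; have [ga [gb [<- <- ogab]]] := lift_ab.
have nNT := order_classes_normT hN.
have cent1_mod_gt0 : 0 < #|cent1_mod N gb|.
  by apply/card_gt0P; exists 1; rewrite inE commg1.
apply/eqP; rewrite quotientT -(eqn_pmul2r cent1_mod_gt0).
by rewrite card_class_coset // -(card_cent1_mod_eq hN hG ogab) card_class_coset.
Qed.
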